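(* A rational $\mathfrak{sl}(2)$-module is indecomposable as an $\mathfrak{sl}(2)$-module if and only if it is $\mathcal R$-indecomposable. Moreover, every indecomposable rational module is a generalized Casimir module. Hence the classes of indecomposable objects in $\mathcal R$, of $\mathcal R$-indecomposable objects of $\mathcal R$, of $\mathcal{RC}^\bullet$-indecomposable objects of $\mathcal{RC}^\bullet$ and of indecomposable objects of $\mathcal{RC}^\bullet$ all coincide.
   Context: $\mathfrak{sl}(2)$ has basis $L_{-1}=f$, $L_0=-\tfrac12 h$, $L_1=-e$ for a Chevalley basis $e,f,h$. An $\mathfrak{sl}(2)$-module $(V,\rho)$ is a $\mathbb{C}[z]$-module via $z\cdot v=\rho(L_0)v$; it is rational if it is, with this structure, a finite-dimensional $\mathbb{C}(z)$-vector space. $\mathcal R$ is the full subcategory of rational modules. Casimir operator: $C_\rho=\rho(L_0)(\rho(L_0)-1)-\rho(L_{-1})\rho(L_1)$; a module is generalized Casimir (of level $\mu$) if $(C_\rho-\mu)^n=0$ for some $\mu\in\mathbb{C}$, $n\ge1$; $\mathcal{RC}^\bullet$ is the full subcategory of rational generalized Casimir modules. A rational module $W$ is indecomposable if it is nonzero and not a direct sum of two nonzero $\mathfrak{sl}(2)$-submodules, and $\mathcal R$-indecomposable (resp. $\mathcal{RC}^\bullet$-indecomposable) if it is nonzero and not a direct sum of two nonzero rational (resp. rational generalized Casimir) submodules. *)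

From HB Require Import structures.
From mathcomp Require Import all_boot all_order all_algebra.
From mathcomp Require Import reals complex.
Set Implicit Arguments. Unset Strict Implicit. Unset Printing Implicit Defensive.
Import Order.TTheory GRing.Theory Num.Theory.
Local Open Scope ring_scope.

Section Sl2.
Variables (K : fieldType) (V : lmodType K).

Definition lin_map (g : V -> V) : Prop :=
  forall (a : K) (u v : V), g (a *: u + v) = a *: g u + g v.

Record sl2rep := Sl2rep {
  rho_e : V -> V;
  rho_f : V -> V;
  rho_h : V -> V;
  rho_e_lin : lin_map rho_e;
  rho_f_lin : lin_map rho_f;
  rho_h_lin : lin_map rho_h;
  rho_he : forall v, rho_h (rho_e v) - rho_e (rho_h v) = 2%:R *: rho_e v;
  rho_hf : forall v, rho_h (rho_f v) - rho_f (rho_h v) = - (2%:R *: rho_f v);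
  rho_ef : forall v, rho_e (rho_f v) - rho_f (rho_e v) = rho_h v
}.

Variable rho : sl2rep.

Definition Lm1 (v : V) : V := rho_f rho v.
Definition L0 (v : V) : V := - (2%:R^-1 *: rho_h rho v).
Definition L1 (v : V) : V := - rho_e rho v.

(* action of a polynomial p(z) through z . v = L_0 v *)
Definition peval (p : {poly K}) (v : V) : V :=
  \sum_(i < size p) p`_i *: iter i L0 v.

Definition casimir (v : V) : V := L0 (L0 v - v) - Lm1 (L1 v).

Definition is_submod (S : V -> Prop) : Prop :=
  [/\ S 0, (forall u v, S u -> S v -> S (u + v)) &
      (forall (a : K) u, S u -> S (a *: u))] /\
  [/\ (forall u, S u -> S (rho_e rho u)),
      (forall u, S u -> S (rho_f rho u)) &
      (forall u, S u -> S (rho_h rho u))].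

(* The submodule S (with the C[z]-structure z . v = L_0 v) is a
   finite-dimensional C(z)-vector space: every nonzero polynomial acts
   bijectively on S (so the action extends to C(z)), and S is spanned
   over C(z) by finitely many vectors. *)
Definition rational_on (S : V -> Prop) : Prop :=
  (forall p : {poly K}, p != 0 ->
     (forall v, S v -> peval p v = 0 -> v = 0) /\
     (forall w, S w -> exists v, S v /\ peval p v = w)) /\
  exists vs : seq V, (forall i, (i < size vs)%N -> S (nth 0 vs i)) /\
    forall v, S v -> exists (q : {poly K}) (ps : 'I_(size vs) -> {poly K}),
      q != 0 /\ peval q v = \sum_(i < size vs) peval (ps i) (nth 0 vs i).

Definition gen_casimir_on (S : V -> Prop) : Prop :=
  exists (mu : K) (n : nat), (0 < n)%N /\
    forall v, S v -> iter n (fun w => casimir w - mu *: w) v = 0.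

Definition nonzero_on (S : V -> Prop) : Prop := exists v, S v /\ v != 0.

Definition direct_sum (S S1 S2 : V -> Prop) : Prop :=
  (forall v, S1 v -> S2 v -> v = 0) /\
  (forall v, S v <-> exists v1 v2, [/\ S1 v1, S2 v2 & v = v1 + v2]).

Definition indec_wrt (P : (V -> Prop) -> Prop) (S : V -> Prop) : Prop :=
  nonzero_on S /\
  ~ (exists S1 S2 : V -> Prop,
       [/\ is_submod S1, is_submod S2, P S1 & P S2] /\
       [/\ nonzero_on S1, nonzero_on S2 & direct_sum S S1 S2]).

Definition whole : V -> Prop := fun _ => True.

Definition rational_mod : Prop := rational_on whole.
Definition gen_casimir : Prop := gen_casimir_on whole.
Definition rational_gen_casimir : Prop := rational_mod /\ gen_casimir.

Definition indecomposable : Prop := indec_wrt (fun _ => True) whole.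
Definition R_indecomposable : Prop := indec_wrt rational_on whole.
Definition RC_indecomposable : Prop :=
  indec_wrt (fun S => rational_on S /\ gen_casimir_on S) whole.

End Sl2.

From HB Require Import structures.
From mathcomp Require Import all_boot all_order all_algebra.
From mathcomp Require Import reals complex.
From mathcomp Require Import ring zify.
From Stdlib Require Import Classical ClassicalEpsilon.
Import GRing.Theory Num.Theory.
Local Open Scope ring_scope.

(* A direct summand of a rational module is rational: the projection onto
   it commutes with [z = L_0], so it carries the bijectivity of nonzero
   polynomials in [z] and a finite spanning family to the summand.
   This gives the first equivalence; the remaining ones are then formal once
   indecomposable rational modules are known to be generalized Casimir.
   For that, since [C] commutes with [L_0], clearing the denominators of the
   coordinates of the [C x_j] on a finite spanning family [x] and applying
   Cayley-Hamilton over [K[z]] yields a nonzero [P(z, C)] killing [V].  Such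
   a [P] forces [L_1] and [L_{-1}] to be injective: a nonzero vector killed
   by [L_1] would generate, under [L_{-1}], Casimir eigenvectors whose
   eigenvalues in [K[z]] are infinitely many distinct roots of [P].  As [L_1]
   commutes with [C] and shifts [z] by one, injectivity of
   [L_1 L_{-1} = L_0 (L_0 + 1) - C] shows that [P(z + 1, C)], hence
   [P(z + 1, C) - P(z, C)], kills [V] as well; lowering the degree in [z]
   this way produces a nonzero [p(C) = 0].  An indecomposable module is not
   the direct sum of two generalized eigenspaces of [C], so [p] may be taken
   to be a power of [X - mu], i.e. [(C - mu)^m = 0]. *)

Section AdditiveFun.
Context {V : zmodType} {g : V -> V}.
Hypothesis gD : {morph g : u v / u + v}.

Lemma addfun0 : g 0 = 0.
Proof. by apply: (@addrI _ (g 0)); rewrite -gD !addr0. Qed.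

Lemma addfunN v : g (- v) = - g v.
Proof. by apply: (@addrI _ (g v)); rewrite -gD !subrr addfun0. Qed.

Lemma addfun_sum I (r : seq I) (P : pred I) (F : I -> V) :
  g (\sum_(i <- r | P i) F i) = \sum_(i <- r | P i) g (F i).
Proof. exact: (big_morph g gD addfun0). Qed.

End AdditiveFun.

Section LinMap.
Context {K : fieldType} {V : lmodType K}.

Lemma linmapD {g : V -> V} : lin_map g -> {morph g : u v / u + v}.
Proof. by move=> hg u v; have := hg 1 u v; rewrite !scale1r. Qed.

Lemma linmap0 {g : V -> V} : lin_map g -> g 0 = 0.
Proof. by move=> /linmapD; apply: addfun0. Qed.

Lemma linmapZ {g : V -> V} : lin_map g -> forall a u, g (a *: u) = a *: g u.
Proof. by move=> hg a u; have := hg a u 0; rewrite !addr0 linmap0 // addr0. Qed.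

Lemma linmapN {g : V -> V} : lin_map g -> forall u, g (- u) = - g u.
Proof. by move=> /linmapD; apply: addfunN. Qed.

Lemma linmapB {g : V -> V} : lin_map g -> forall u v, g (u - v) = g u - g v.
Proof. by move=> hg u v; rewrite linmapD // linmapN. Qed.

Lemma linmap_id : lin_map (fun v : V => v). Proof. by []. Qed.

Lemma linmap_comp {g1 g2 : V -> V} :
  lin_map g1 -> lin_map g2 -> lin_map (fun v => g1 (g2 v)).
Proof. by move=> h1 h2 a u v; rewrite /= h2 h1. Qed.

Lemma linmap_add {g1 g2 : V -> V} :
  lin_map g1 -> lin_map g2 -> lin_map (fun v => g1 v + g2 v).
Proof. by move=> h1 h2 a u v; rewrite h1 h2 scalerDr addrACA. Qed.

Lemma linmap_opp {g : V -> V} : lin_map g -> lin_map (fun v => - g v).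
Proof. by move=> h1 a u v; rewrite h1 opprD scalerN. Qed.

Lemma linmap_scale (c : K) {g : V -> V} : lin_map g -> lin_map (fun v => c *: g v).
Proof. by move=> h1 a u v; rewrite h1 scalerDr !scalerA mulrC. Qed.

End LinMap.

(* [sc] makes [V] an [A]-module and [op] is an [A]-linear endomorphism, so
   that [polyop D P] is [P(op)].  The [A]-module need not be an [lmodType]:
   below [A] is [K[z]] acting through [L_0]. *)
Record endo_data (A : comNzRingType) (V : zmodType) := EndoData {
  sc : A -> V -> V;
  op : V -> V;
  scDv : forall a, {morph sc a : u v / u + v};
  scDl : forall a b v, sc (a + b) v = sc a v + sc b v;
  sc1 : forall v, sc 1 v = v;
  scM : forall a b v, sc (a * b) v = sc a (sc b v);
  sc_op : forall a v, sc a (op v) = op (sc a v);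
  opD : {morph op : u v / u + v}
}.
Arguments sc {A V}.
Arguments op {A V}.
Arguments scDv {A V}.
Arguments scDl {A V}.
Arguments sc1 {A V}.
Arguments scM {A V}.
Arguments sc_op {A V}.
Arguments opD {A V}.

Definition polyop {A : comNzRingType} {V : zmodType} (D : endo_data A V)
    (P : {poly A}) (v : V) : V :=
  \sum_(i < size P) sc D P`_i (iter i (op D) v).

Section PolyOp.
Context {A : comNzRingType} {V : zmodType} (D : endo_data A V).
Local Notation s := (sc D).
Local Notation T := (op D).
Local Notation pT := (polyop D).
Implicit Types (P Q : {poly A}) (u v : V).

Lemma sc0 v : s 0 v = 0.
Proof. by apply: (@addrI _ (s 0 v)); rewrite -scDl !addr0. Qed.

Lemma scN a v : s (- a) v = - s a v.
Proof. by apply: (@addrI _ (s a v)); rewrite -scDl !subrr sc0. Qed.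

Lemma iter_opD i : {morph iter i T : u v / u + v}.
Proof. by elim: i => [//|i IH] u v /=; rewrite IH opD. Qed.

Lemma polyop_pad P n v : (size P <= n)%N ->
  pT P v = \sum_(i < n) s P`_i (iter i T v).
Proof.
move=> hn; rewrite /polyop (big_ord_widen n (fun i => s P`_i (iter i T v)) hn).
rewrite big_mkcond /=; apply: eq_bigr => i _; case: ifP => // /negbT.
by rewrite -leqNgt => /(nth_default 0) ->; rewrite sc0.
Qed.

Lemma polyop0 v : pT 0 v = 0.
Proof. by rewrite /polyop size_poly0 big_ord0. Qed.

Lemma polyopD P Q v : pT (P + Q) v = pT P v + pT Q v.
Proof.
pose n := maxn (size P) (size Q).
rewrite (@polyop_pad (P + Q) n) ?size_polyD // (@polyop_pad P n) ?leq_maxl //.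
rewrite (@polyop_pad Q n) ?leq_maxr // -big_split /=.
by apply: eq_bigr => i _; rewrite coefD scDl.
Qed.

Lemma polyopN P v : pT (- P) v = - pT P v.
Proof.
rewrite /polyop size_polyN (big_morph _ (@opprD _) (@oppr0 _)).
by apply: eq_bigr => i _; rewrite coefN scN.
Qed.

Lemma polyopB P Q v : pT (P - Q) v = pT P v - pT Q v.
Proof. by rewrite polyopD polyopN. Qed.

Lemma polyop_sum I (r : seq I) (Pr : pred I) (F : I -> {poly A}) v :
  pT (\sum_(i <- r | Pr i) F i) v = \sum_(i <- r | Pr i) pT (F i) v.
Proof. by apply: (big_morph (pT^~ v)) => [P Q|]; rewrite ?polyopD ?polyop0. Qed.

Lemma polyop_vecD P : {morph pT P : u v / u + v}.
Proof.
by move=> u v; rewrite /polyop -big_split; apply: eq_bigr => i _; rewrite iter_opD scDv.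
Qed.

Lemma polyop_vec0 P : pT P 0 = 0.
Proof. exact: addfun0 (polyop_vecD P). Qed.

Lemma polyop_vec_sum P I (r : seq I) (Pr : pred I) (F : I -> V) :
  pT P (\sum_(i <- r | Pr i) F i) = \sum_(i <- r | Pr i) pT P (F i).
Proof. exact: addfun_sum (polyop_vecD P) _ _ _ _. Qed.

Lemma polyopC c v : pT c%:P v = s c v.
Proof. by rewrite (@polyop_pad _ 1) ?size_polyC ?leq_b1 // big_ord1 coefC. Qed.

Lemma polyop1 v : pT 1 v = v.
Proof. by rewrite -polyC1 polyopC sc1. Qed.

Lemma polyopX v : pT 'X v = T v.
Proof.
rewrite (@polyop_pad _ 2) ?size_polyX // !big_ord_recl big_ord0 !coefX /=.
by rewrite sc0 sc1 add0r addr0.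
Qed.

Lemma polyop_comm (S : V -> V) : {morph S : u v / u + v} ->
  (forall v, S (T v) = T (S v)) -> (forall a v, S (s a v) = s a (S v)) ->
  forall P v, S (pT P v) = pT P (S v).
Proof.
move=> SD ST Ss P v; rewrite /polyop (addfun_sum SD); apply: eq_bigr => i _.
by rewrite Ss; congr (s _ _); elim: (i : nat) => //= k <-; rewrite ST.
Qed.

Lemma polyop_op P v : pT P (T v) = T (pT P v).
Proof. by symmetry; apply: polyop_comm => // [|a w]; [exact: opD|rewrite sc_op]. Qed.

Lemma sc_polyop a P v : s a (pT P v) = pT P (s a v).
Proof.
apply: polyop_comm => [|w|c w]; [exact: scDv|exact: sc_op|by rewrite -!scM mulrC].
Qed.

Lemma polyopM P Q v : pT (P * Q) v = pT P (pT Q v).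
Proof.
have polyopMX R w : pT (R * 'X) w = pT R (T w).
  rewrite (@polyop_pad _ (size R).+1); last first.
    by apply: leq_trans (size_polyMleq _ _) _; rewrite size_polyX addn2.
  rewrite big_ord_recl coefMX eqxx sc0 add0r /polyop; apply: eq_bigr => i _.
  by rewrite coefMX /= -iterSr.
have polyopCM c R w : pT (c%:P * R) w = s c (pT R w).
  rewrite (@polyop_pad _ (size R)); last first.
    apply: leq_trans (size_polyMleq _ _) _; rewrite size_polyC.
    by case: (c != 0); rewrite ?add0n ?add1n // leq_pred.
  rewrite /polyop (addfun_sum (scDv D c)); apply: eq_bigr => i _.
  by rewrite coefCM scM.
elim/poly_ind: P v => [|P c IH] v; first by rewrite mul0r !polyop0.
rewrite mulrDl mulrAC polyopD polyopMX IH polyopCM polyopD polyopMX polyopC.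
by rewrite polyop_op.
Qed.

Lemma polyop_eigen P a y : T y = s a y -> pT P y = s P.[a] y.
Proof.
move=> Ty; have iterTy i : iter i T y = s (a ^+ i) y.
  elim: i => [|i IH] /=; first by rewrite expr0 sc1.
  by rewrite IH -sc_op Ty -scM exprSr.
rewrite horner_coef (big_morph (s^~ y) (fun a b => scDl D a b y) (sc0 y)).
by apply: eq_bigr => i _; rewrite iterTy scM.
Qed.

End PolyOp.

Lemma polyop_linmap {A : comNzRingType} {K : fieldType} {V : lmodType K}
    (D : endo_data A V) :
  (forall a, lin_map (sc D a)) -> lin_map (op D) -> forall P, lin_map (polyop D P).
Proof.
move=> hs hT P a u v; rewrite polyop_vecD; congr (_ + _); symmetry.
apply: (@polyop_comm _ _ D (fun w => a *: w)) => [x y|w|c w].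
- exact: scalerDr.
- by rewrite linmapZ.
- by rewrite (linmapZ (hs c)).
Qed.

Section ScaleEndo.
Context {K : fieldType} {V : lmodType K} {T : V -> V} (hT : lin_map T).
Implicit Types (p : {poly K}) (v : V).

Definition scale_endo : endo_data K V.
Proof.
refine (@EndoData K V (fun c v => c *: v) T _ _ _ _ _ (linmapD hT)).
- by move=> a u v; rewrite scalerDr.
- by move=> a b v; rewrite scalerDl.
- by move=> v; rewrite scale1r.
- by move=> a b v; rewrite scalerA.
- by move=> a v; rewrite linmapZ.
Defined.

Local Notation pT := (polyop scale_endo).

Lemma polyop_scale_lin P : lin_map (pT P).
Proof. by apply: polyop_linmap => //= c; exact: (linmap_scale c linmap_id). Qed.

Lemma polyop_scaleC c v : pT c%:P v = c *: v.
Proof. exact: polyopC. Qed.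

Lemma polyop_shift (S : V -> V) (c : K) : lin_map S ->
  (forall v, S (T v) = T (S v) + c *: S v) ->
  forall p v, S (pT p v) = pT (p \Po ('X + c%:P)) (S v).
Proof.
move=> hS ST p; elim/poly_ind: p => [|p a IH] v.
  by rewrite comp_poly0 !polyop0 linmap0.
rewrite polyopD polyopM polyopX polyop_scaleC linmapD // linmapZ // IH ST.
rewrite comp_polyD comp_polyM comp_polyX comp_polyC polyopD polyopM polyop_scaleC.
by rewrite polyopD polyopX polyop_scaleC.
Qed.

Lemma polyop_coprime_direct_sum (q1 q2 : {poly K}) : coprimep q1 q2 ->
  (forall v, pT (q1 * q2) v = 0) ->
  direct_sum (@whole K V) (fun v => pT q1 v = 0) (fun v => pT q2 v = 0).
Proof.
move=> /Bezout_eq1_coprimepP [[u1 u2] /= hu] h12.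
have dec v : v = pT (u2 * q2) v + pT (u1 * q1) v.
  by rewrite -polyopD addrC hu polyop1.
have ker1 v : pT q1 (pT (u2 * q2) v) = 0.
  by rewrite -polyopM mulrCA polyopM h12 polyop_vec0.
have ker2 v : pT q2 (pT (u1 * q1) v) = 0.
  by rewrite -polyopM mulrCA [q2 * q1]mulrC polyopM h12 polyop_vec0.
split=> [v h1 h2|v]; first by rewrite (dec v) !polyopM h1 h2 !polyop_vec0 addr0.
by split=> // _; exists (pT (u2 * q2) v), (pT (u1 * q1) v); split=> //; exact: dec.
Qed.

End ScaleEndo.

(* Cayley-Hamilton: the adjugate of [char_poly_mx B] clears the relations. *)
Lemma polyop_char_poly {A : comNzRingType} {V : zmodType} (D : endo_data A V)
    d (x : 'I_d -> V) (B : 'M[A]_d) :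
  (forall j, op D (x j) = \sum_i sc D (B j i) (x i)) ->
  forall k, polyop D (char_poly B) (x k) = 0.
Proof.
move=> hB k; pose M := char_poly_mx B.
have rowM j : \sum_i polyop D (M j i) (x i) = 0.
  under eq_bigr => i _ do rewrite /M /char_poly_mx !mxE polyopB polyopC.
  rewrite sumrB (bigD1 j) //= eqxx mulr1n polyopX big1 ?addr0 ?hB ?subrr // => i.
  by rewrite eq_sym => /negbTE ->; rewrite mulr0n polyop0.
have -> : polyop D (char_poly B) (x k) =
    \sum_i polyop D ((\adj M *m M) k i) (x i).
  rewrite mul_adj_mx (bigD1 k) //= mxE eqxx mulr1n big1 ?addr0 // => i /negbTE.
  by rewrite mxE eq_sym => ->; rewrite mulr0n polyop0.
under eq_bigr => i _ do rewrite mxE polyop_sum.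
rewrite exchange_big /= big1 // => j _.
under eq_bigr => i _ do rewrite polyopM.
by rewrite -polyop_vec_sum rowM polyop_vec0.
Qed.

Section Sl2Linear.
Context {K : fieldType} {V : lmodType K} (rho : sl2rep V).
Local Notation l0 := (L0 rho).
Local Notation l1 := (L1 rho).
Local Notation lm1 := (Lm1 rho).
Local Notation cas := (casimir rho).

Lemma L0_lin : lin_map l0.
Proof. by apply/linmap_opp/linmap_scale/rho_h_lin. Qed.

Lemma L1_lin : lin_map l1.
Proof. by apply/linmap_opp/rho_e_lin. Qed.

Lemma Lm1_lin : lin_map lm1.
Proof. exact: rho_f_lin. Qed.

Lemma casimir_lin : lin_map cas.
Proof.
apply: linmap_add; last by apply/linmap_opp/linmap_comp; [exact: Lm1_lin|exact: L1_lin].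
apply: linmap_comp; first exact: L0_lin.
by apply: linmap_add; [exact: L0_lin|apply/linmap_opp/linmap_id].
Qed.

Local Notation pev := (polyop (scale_endo L0_lin)).

Lemma pevalE : peval rho = pev.
Proof. by []. Qed.

Section Submodule.
Context {S : V -> Prop} (hS : is_submod rho S).

Lemma submod0 : S 0. Proof. by case: hS => [[]]. Qed.

Lemma submodD u v : S u -> S v -> S (u + v).
Proof. by case: hS => [[_ hD _] _]; apply: hD. Qed.

Lemma submodZ a u : S u -> S (a *: u).
Proof. by case: hS => [[_ _ hZ] _]; apply: hZ. Qed.

Lemma submodB u v : S u -> S v -> S (u - v).
Proof. by move=> hu hv; rewrite -scaleN1r; apply/submodD/submodZ. Qed.

Lemma submod_sum I (r : seq I) (P : pred I) (F : I -> V) :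
  (forall i, P i -> S (F i)) -> S (\sum_(i <- r | P i) F i).
Proof. by move=> hF; apply: big_ind => //; [exact: submod0|exact: submodD]. Qed.

Lemma submod_L0 u : S u -> S (l0 u).
Proof.
by case: hS => _ [_ _ hh] hu; rewrite /L0 -scaleN1r; apply/submodZ/submodZ/hh.
Qed.

Lemma submod_pev p u : S u -> S (pev p u).
Proof.
move=> hu; apply: submod_sum => i _; apply: submodZ.
by elim: (i : nat) => //= k; apply: submod_L0.
Qed.

End Submodule.

Section DirectSummand.
Context {S1 S2 : V -> Prop} (hS1 : is_submod rho S1) (hS2 : is_submod rho S2).
Hypothesis hsum : direct_sum (@whole K V) S1 S2.

Lemma direct_sum_uniq a b a' b' : S1 a -> S2 b -> S1 a' -> S2 b' ->
  a + b = a' + b' -> a = a'.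
Proof.
move=> ha hb ha' hb' eq; apply/eqP; rewrite -subr_eq0; apply/eqP.
apply: hsum.1; first exact: submodB.
have -> : a - a' = b' - b by rewrite -[a](addrK b) eq addrAC [a' + b']addrC addrK.
exact: submodB.
Qed.

Lemma direct_sum_proj : exists pr : V -> V, forall v, S1 (pr v) /\ S2 (v - pr v).
Proof.
have hd v : exists v1, S1 v1 /\ S2 (v - v1).
  have [v1 [v2 [h1 h2 ->]]] := (hsum.2 v).1 I.
  by exists v1; rewrite addrC addKr.
exists (fun v => sval (constructive_indefinite_description _ (hd v))) => v.
by case: (constructive_indefinite_description _ _).
Qed.

Section Projection.
Context {pr : V -> V} (prP : forall v, S1 (pr v) /\ S2 (v - pr v)).

Lemma proj_eq v a : S1 a -> S2 (v - a) -> pr v = a.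
Proof.
move=> ha hva; have [h1 h2] := prP v.
by apply: (direct_sum_uniq _ _ _ _ h1 h2 ha hva); rewrite !subrKC.
Qed.

Lemma proj_id v : S1 v -> pr v = v.
Proof. by move=> hv; apply: proj_eq; rewrite // subrr; exact: (submod0 hS2). Qed.

Lemma projD : {morph pr : u v / u + v}.
Proof.
move=> u v; apply: proj_eq; first exact: (submodD hS1 _ _ (prP u).1 (prP v).1).
by rewrite opprD addrACA; exact: (submodD hS2 _ _ (prP u).2 (prP v).2).
Qed.

Lemma proj_pev p v : pr (pev p v) = pev p (pr v).
Proof.
apply: proj_eq; first exact/(submod_pev hS1)/(prP v).1.
by rewrite -(linmapB (polyop_scale_lin _ p)); apply/(submod_pev hS2)/(prP v).2.
Qed.

End Projection.

Lemma summand_rational : rational_mod rho -> rational_on rho S1.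
Proof.
rewrite /rational_mod /rational_on pevalE => -[hrat [vs [_ hspan]]].
have [pr prP] := direct_sum_proj.
split=> [p p0|].
  split=> [v _|w hw]; first exact: (hrat p p0).1 v I.
  have [v [_ pv]] := (hrat p p0).2 w I.
  by exists (pr v); split; [exact: (prP v).1|rewrite -proj_pev // pv proj_id].
exists (map pr vs); split=> [i|v hv].
  by rewrite size_map => hi; rewrite (nth_map 0) //; exact: (prP _).1.
have [q [ps [q0 eq]]] := hspan v I; rewrite size_map; exists q, ps; split=> //.
rewrite -(proj_id prP _ hv) -proj_pev // eq (addfun_sum (projD prP)).
by apply: eq_bigr => i _; rewrite proj_pev // (nth_map 0).
Qed.

End DirectSummand.

Lemma direct_sum_sym {S S1 S2 : V -> Prop} : direct_sum S S1 S2 -> direct_sum S S2 S1.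
Proof.
move=> [hi hd]; split=> [v a b|v]; first exact: hi.
by rewrite hd; split=> -[v1 [v2 [a b ->]]]; exists v2, v1; rewrite addrC.
Qed.

Lemma direct_sum_trivial_r (S1 S2 : V -> Prop) : direct_sum (@whole K V) S1 S2 ->
  ~ nonzero_on S2 -> forall v, S1 v.
Proof.
move=> [_ hd] n2 v; have [v1 [v2 [h1 h2 ->]]] := (hd v).1 I.
have -> : v2 = 0 by apply: NNPP => /eqP v20; apply: n2; exists v2.
by rewrite addr0.
Qed.

Lemma indec_wrt_mono (P Q : (V -> Prop) -> Prop) : (forall S, P S -> Q S) ->
  indec_wrt rho Q (@whole K V) -> indec_wrt rho P (@whole K V).
Proof.
move=> hPQ [nz hn]; split=> // -[S1 [S2 [[? ? ? ?] ?]]]; apply: hn.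
by exists S1, S2; split=> //; split=> //; apply: hPQ.
Qed.

Lemma rational_indecomposableE : rational_mod rho ->
  (indecomposable rho <-> R_indecomposable rho).
Proof.
move=> hr; split; first exact: indec_wrt_mono.
move=> [nz hn]; split=> // -[S1 [S2 [[h1 h2 _ _] [n1 n2 ds]]]]; apply: hn.
exists S1, S2; split; split=> //; first exact: summand_rational h1 h2 ds hr.
exact: summand_rational h2 h1 (direct_sum_sym ds) hr.
Qed.

End Sl2Linear.

Lemma size_comp_XaddC_sub {R : idomainType} (p : {poly R}) (c : R) :
  (size (p \Po ('X + c%:P) - p)%R <= (size p).-1)%N.
Proof.
have [->|p0] := eqVneq p 0; first by rewrite comp_poly0 subr0 size_poly0.
have sz : size (p \Po ('X + c%:P)) = size p.
  by apply: size_comp_poly2; exact: size_XaddC.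
have lc : lead_coef (p \Po ('X + c%:P)) = lead_coef p.
  by rewrite lead_coef_comp ?size_XaddC // lead_coefXaddC expr1n mulr1.
apply/leq_sizeP => j hj; rewrite coefB.
have [->|hne] := eqVneq j (size p).-1.
  by move: lc; rewrite !lead_coefE sz => ->; rewrite subrr.
have hj' : (size p <= j)%N.
  move: hj hne; rewrite -(prednK (n := size p)) ?size_poly_gt0 //= => a b.
  by rewrite ltn_neqAle eq_sym b a.
by rewrite !nth_default ?subrr // sz.
Qed.

Lemma poly_monic_dilate_neq0 {R : idomainType} (p : {poly R}) (a : R) :
  p \is monic -> a != 0 -> \poly_(k < size p) (p`_k * a ^+ k) != 0.
Proof.
move=> mp a0; apply/eqP => /(congr1 (fun r : {poly R} => r`_(size p).-1)) /eqP.
rewrite coef_poly coef0 prednK ?size_poly_gt0 ?monic_neq0 // leqnn -lead_coefE.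
by rewrite (monicP mp) mul1r expf_eq0 (negbTE a0) andbF.
Qed.

Section ShiftPoly.
Context {K : numFieldType}.
Implicit Types p : {poly K}.

(* A polynomial invariant under z |-> z + 1 takes the value p.[0] at every
   integer, so it is constant in characteristic zero. *)
Lemma comp_Xadd1_neq p : (1 < size p)%N -> p \Po ('X + 1%:P) != p.
Proof.
move=> hs; apply/negP => /eqP H.
have hn n : p.[n%:R] = p.[0].
  by elim: n => [|n IH] //; rewrite -IH -{2}H horner_comp !hornerE natr1.
pose q := p - (p.[0])%:P.
have q0 : q != 0.
  apply/negP => /eqP /subr0_eq hq.
  by move: hs; rewrite hq size_polyC; case: (_ != 0).
have hall : all (root q) (map (fun n => n%:R) (iota 0 (size q))).
  by apply/allP => x /mapP [m _ ->]; rewrite /root /q !hornerE hn subrr.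
have hu : uniq (map (fun n => (n%:R : K)) (iota 0 (size q))).
  by rewrite map_inj_uniq ?iota_uniq // => a b /eqP; rewrite eqr_nat => /eqP.
have := max_poly_roots q0 hall hu.
by rewrite size_map size_iota ltnn.
Qed.

(* The Casimir eigenvalue, as a polynomial in [z = L_0], on [L_{-1}^k w] when
   [L_1 w = 0], and on [L_1^k u] when [L_{-1} u = 0]. *)
Definition casimir_down (k : nat) : {poly K} := ('X - k%:R) * ('X - k.+1%:R).
Definition casimir_up (k : nat) : {poly K} := ('X + k%:R) * ('X + k.+1%:R).

Lemma natr_comp (k : nat) (q : {poly K}) : (k%:R : {poly K}) \Po q = k%:R.
Proof. by rewrite -polyC_natr comp_polyC. Qed.

Lemma casimir_down_shift k :
  casimir_down k \Po ('X + (-1)%:P) = casimir_down k.+1.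
Proof.
rewrite /casimir_down comp_polyM !comp_polyB comp_polyX !natr_comp polyCN polyC1.
ring.
Qed.

Lemma casimir_up_shift k : casimir_up k \Po ('X + 1%:P) = casimir_up k.+1.
Proof.
rewrite /casimir_up comp_polyM !comp_polyD comp_polyX !natr_comp polyC1.
ring.
Qed.

Lemma casimir_down_inj : injective casimir_down.
Proof.
move=> k m /(congr1 (horner^~ 0)); rewrite /casimir_down -!polyC_natr !hornerE.
have E (n : nat) : (- n%:R) * (- n.+1%:R) = (n * n.+1)%:R :> K by rewrite natrM; ring.
by rewrite !E => /eqP; rewrite eqr_nat => /eqP; nia.
Qed.

Lemma casimir_up_inj : injective casimir_up.
Proof.
move=> k m /(congr1 (horner^~ 0)); rewrite /casimir_up -!polyC_natr !hornerE.
have E (n : nat) : n%:R * n.+1%:R = (n * n.+1)%:R :> K by rewrite natrM.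
by rewrite !E => /eqP; rewrite eqr_nat => /eqP; nia.
Qed.

Lemma XX1_sub_casimir_down_neq0 k : 'X * ('X + 1) - casimir_down k != 0.
Proof.
apply/negP => /eqP /(congr1 (horner^~ (-1))).
rewrite /casimir_down -!polyC_natr !hornerE.
have -> : (-1) * (-1 + 1) - (-1 - k%:R) * (-1 - k.+1%:R) = - (k.+1 * k.+2)%:R :> K.
  by rewrite natrM; ring.
by move=> /eqP; rewrite oppr_eq0 pnatr_eq0.
Qed.

End ShiftPoly.

Section Sl2Casimir.
Context {K : numFieldType} {V : lmodType K} (rho : sl2rep V).
Local Notation e := (rho_e rho).
Local Notation f := (rho_f rho).
Local Notation h := (rho_h rho).
Local Notation l0 := (L0 rho).
Local Notation l1 := (L1 rho).
Local Notation lm1 := (Lm1 rho).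
Local Notation cas := (casimir rho).
Local Notation pev := (polyop (scale_endo (L0_lin rho))).
Local Notation cpol := (polyop (scale_endo (casimir_lin rho))).
Implicit Types (p : {poly K}) (u v w : V).

Lemma two_neq0 : (2%:R : K) != 0. Proof. by rewrite pnatr_eq0. Qed.

Lemma L1_L0 v : l1 (l0 v) = l0 (l1 v) + l1 v.
Proof.
rewrite /L1 /L0 (linmapN (rho_e_lin rho)) (linmapZ (rho_e_lin rho)).
rewrite (linmapN (rho_h_lin rho)) opprK scalerN opprK.
have /eqP := rho_he rho v; rewrite subr_eq => /eqP ->.
by rewrite scalerDr scalerA mulVf ?two_neq0 // scale1r addrAC subrr add0r.
Qed.

Lemma Lm1_L0 v : lm1 (l0 v) = l0 (lm1 v) - lm1 v.
Proof.
rewrite /Lm1 /L0 (linmapN (rho_f_lin rho)) (linmapZ (rho_f_lin rho)).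
have /eqP := rho_hf rho v; rewrite subr_eq => /eqP ->.
rewrite scalerDr scalerN scalerA mulVf ?two_neq0 // scale1r.
by rewrite opprD opprK addrAC subrr add0r.
Qed.

Lemma L1_Lm1 v : l1 (lm1 v) = lm1 (l1 v) + 2%:R *: l0 v.
Proof.
rewrite /L1 /Lm1 /L0 (linmapN (rho_f_lin rho)) scalerN scalerA.
rewrite mulfV ?two_neq0 // scale1r.
have /eqP := rho_ef rho v; rewrite subr_eq => /eqP ->.
by rewrite opprD addrC.
Qed.

Lemma casimir_L0 v : cas (l0 v) = l0 (cas v).
Proof.
rewrite /casimir L1_L0 (linmapD (Lm1_lin rho)) Lm1_L0 subrK.
by rewrite (linmapB (L0_lin rho) (l0 (l0 v - v))) (linmapB (L0_lin rho) (l0 v) v).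
Qed.

Lemma addr_subD2 (x y z : V) : x + y - (z + 2%:R *: y) = x - y - z.
Proof. by rewrite scaler_nat mulr2n !opprD !addrA [x + y - z]addrAC addrK addrAC. Qed.

Lemma casimir_L1 v : cas (l1 v) = l1 (cas v).
Proof.
have L1_L0B : l1 (l0 v - v) = l0 (l1 v) by rewrite (linmapB (L1_lin rho)) L1_L0 addrK.
rewrite /casimir (linmapB (L1_lin rho)) L1_Lm1 L1_L0 L1_L0B addr_subD2.
by rewrite (linmapB (L0_lin rho)).
Qed.

Lemma casimir_Lm1 v : cas (lm1 v) = lm1 (cas v).
Proof.
have L0_Lm1 w : l0 (lm1 w) = lm1 (l0 w) + lm1 w by rewrite Lm1_L0 subrK.
rewrite /casimir L0_Lm1 addrK L0_Lm1 L1_Lm1 -(linmapD (Lm1_lin rho)).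
rewrite -(linmapB (Lm1_lin rho)).
by rewrite addr_subD2 (linmapB (L0_lin rho)).
Qed.

Lemma L1_Lm1_casimir v : l1 (lm1 v) = l0 (l0 v + v) - cas v.
Proof.
rewrite L1_Lm1 /casimir (linmapD (L0_lin rho)) (linmapB (L0_lin rho)).
set a := l0 (l0 v); set x := l0 v.
by rewrite scaler_nat mulr2n !opprB [RHS]addrCA [a + x]addrC addrACA subrr addr0.
Qed.

Lemma casimir_e v : cas (e v) = e (cas v).
Proof.
have eE w : e w = - l1 w by rewrite /L1 opprK.
by rewrite !eE (linmapN (casimir_lin rho)) casimir_L1.
Qed.

Lemma casimir_f v : cas (f v) = f (cas v).
Proof. exact: casimir_Lm1. Qed.

Lemma casimir_h v : cas (h v) = h (cas v).
Proof.
have hE w : h w = - (2%:R *: l0 w).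
  by rewrite /L0 scalerN opprK scalerA mulfV ?two_neq0 // scale1r.
by rewrite !hE (linmapN (casimir_lin rho)) (linmapZ (casimir_lin rho)) casimir_L0.
Qed.

Lemma casimir_pev p v : cas (pev p v) = pev p (cas v).
Proof.
apply: polyop_comm; [exact: linmapD (casimir_lin rho)|exact: casimir_L0|].
by move=> c w; rewrite (linmapZ (casimir_lin rho)).
Qed.

Lemma L1_pev p v : l1 (pev p v) = pev (p \Po ('X + 1%:P)) (l1 v).
Proof. by apply: polyop_shift; [exact: L1_lin|move=> w; rewrite L1_L0 scale1r]. Qed.

Lemma Lm1_pev p v : lm1 (pev p v) = pev (p \Po ('X + (-1)%:P)) (lm1 v).
Proof. by apply: polyop_shift; [exact: Lm1_lin|move=> w; rewrite Lm1_L0 scaleN1r]. Qed.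

Definition pev_endo {S : V -> V} (hS : lin_map S)
    (SL0 : forall v, S (l0 v) = l0 (S v)) : endo_data {poly K} V.
Proof.
refine (@EndoData _ _ pev S (polyop_vecD _) (polyopD _) (polyop1 _) (polyopM _) _
  (linmapD hS)).
move=> p v; symmetry; apply: polyop_comm => //; first exact: linmapD hS.
by move=> c w; rewrite (linmapZ hS).
Defined.

(* [act P] is [P(z, C)] for [P] in [K[z][C]]. *)
Local Notation act := (polyop (pev_endo (casimir_lin rho) casimir_L0)).
Implicit Types P Q : {poly {poly K}}.

Lemma act_L0 P v : act P (l0 v) = l0 (act P v).
Proof.
symmetry; apply: polyop_comm; [exact: linmapD (L0_lin rho)| |].
  by move=> w /=; rewrite casimir_L0.
by move=> c w /=; rewrite polyop_op.
Qed.

Lemma act_casimir P v : act P (cas v) = cas (act P v).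
Proof. exact: polyop_op. Qed.

Lemma act_lin P : lin_map (act P).
Proof.
by apply: polyop_linmap; [move=> c; exact: polyop_scale_lin|exact: casimir_lin].
Qed.

Lemma L1_act P v :
  l1 (act P v) = act (map_poly (fun a => a \Po ('X + 1%:P)) P) (l1 v).
Proof.
rewrite [RHS](@polyop_pad _ _ _ _ (size P)); last exact: size_poly.
rewrite [act P v](@polyop_pad _ _ _ _ (size P)) //.
rewrite (addfun_sum (linmapD (L1_lin rho))); apply: eq_bigr => i _ /=.
rewrite L1_pev coef_map_id0 ?comp_poly0 //; congr (pev _ _).
by elim: (i : nat) => //= k IH; rewrite -casimir_L1 IH.
Qed.

Lemma act_map_polyC p v : act (map_poly polyC p) v = cpol p v.
Proof.
rewrite [LHS]/polyop size_map_polyC; apply: eq_bigr => i _.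
by rewrite coef_map /= polyop_scaleC.
Qed.

Section TorsionFree.
Hypothesis pev_inj : forall p, p != 0 -> forall v, pev p v = 0 -> v = 0.

Section Annihilator.
Variable P : {poly {poly K}}.
Hypotheses (P0 : P != 0) (hP : forall v, act P v = 0).

(* Each Casimir eigenvalue [s k], a polynomial in [z], is a root of [P]. *)
Lemma eigen_seq_not_injective (y : nat -> V) (s : nat -> {poly K}) :
  (forall k, y k != 0) -> (forall k, cas (y k) = pev (s k) (y k)) ->
  ~ injective s.
Proof.
move=> y0 ys sinj.
have rt k : root P (s k).
  apply/eqP; apply: contraNeq (y0 k) => hk; apply/eqP; apply: (pev_inj _ hk).
  by have /= <- := polyop_eigen (pev_endo (casimir_lin rho) casimir_L0) P _ _ (ys k).
have hall : all (root P) (map s (iota 0 (size P))).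
  by apply/allP => x /mapP [k _ ->].
have hu : uniq (map s (iota 0 (size P))) by rewrite (map_inj_uniq sinj) iota_uniq.
by have := max_poly_roots P0 hall hu; rewrite size_map size_iota ltnn.
Qed.

Lemma L1_inj w : l1 w = 0 -> w = 0.
Proof.
move=> hw; apply/eqP/negPn/negP => w0.
pose y k := iter k lm1 w.
have ys k : cas (y k) = pev (casimir_down k) (y k).
  elim: k => [|k IH] /=; last by rewrite casimir_Lm1 IH Lm1_pev casimir_down_shift.
  rewrite /casimir hw (linmap0 (Lm1_lin rho)) subr0 /casimir_down subr0.
  by rewrite polyopM polyopX polyopB polyopX polyop1.
have y0 k : y k != 0.
  elim: k => [|k IH] //=; apply: contraNneq IH => hyk.
  have := L1_Lm1_casimir (y k); rewrite hyk (linmap0 (L1_lin rho)) ys.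
  have -> : l0 (l0 (y k) + y k) = pev ('X * ('X + 1)) (y k).
    by rewrite polyopM polyopX polyopD polyopX polyop1.
  by rewrite -polyopB => /esym /(pev_inj _ (XX1_sub_casimir_down_neq0 k)) ->.
exact: eigen_seq_not_injective y0 ys casimir_down_inj.
Qed.

Lemma Lm1_inj u : lm1 u = 0 -> u = 0.
Proof.
move=> hu; apply/eqP/negPn/negP => u0.
pose y k := iter k l1 u.
have ys k : cas (y k) = pev (casimir_up k) (y k).
  elim: k => [|k IH] /=; last by rewrite casimir_L1 IH L1_pev casimir_up_shift.
  have := L1_Lm1_casimir u; rewrite hu (linmap0 (L1_lin rho)) => /eqP.
  rewrite eq_sym subr_eq0 => /eqP <-; rewrite /casimir_up addr0.
  by rewrite polyopM polyopX polyopD polyopX polyop1.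
have y0 k : y k != 0.
  by elim: k => [|k IH] //=; apply: contraNneq IH => /L1_inj ->.
exact: eigen_seq_not_injective y0 ys casimir_up_inj.
Qed.

(* [L_1 L_{-1} = L_0 (L_0 + 1) - C] commutes with every [act Q], while [L_1]
   shifts [z] by one. *)
Lemma annihilator_shift Q : (forall v, act Q v = 0) ->
  forall v, act (map_poly (fun a => a \Po ('X + 1%:P)) Q) v = 0.
Proof.
move=> hQ v; set Qs := map_poly _ Q; apply/Lm1_inj/L1_inj.
rewrite L1_Lm1_casimir -act_L0 -(linmapD (act_lin Qs)) -act_L0 -act_casimir.
by rewrite -(linmapB (act_lin Qs)) -L1_Lm1_casimir -L1_act hQ (linmap0 (L1_lin rho)).
Qed.

Lemma annihilator_descent n Q : Q != 0 -> (forall v, act Q v = 0) ->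
  (forall i, (size (Q`_i)%R <= n.+1)%N) ->
  exists p : {poly K}, p != 0 /\ forall v, cpol p v = 0.
Proof.
elim: n Q => [|n IH] Q Q0 hQ hs.
  exists (map_poly (fun a : {poly K} => a`_0) Q).
  have QE : Q = map_poly polyC (map_poly (fun a : {poly K} => a`_0) Q).
    apply/polyP => i; rewrite coef_map /= coef_map_id0 ?coef0 //.
    exact: size1_polyC.
  split=> [|v]; last by rewrite -act_map_polyC -QE.
  by apply: contraNneq Q0 => p0; rewrite QE p0 map_poly0.
have [hs'|/not_all_ex_not [i hi]] := classic (forall i, (size (Q`_i)%R <= n.+1)%N).
  exact: IH Q Q0 hQ hs'.
pose Qs := map_poly (fun a => a \Po ('X + 1%:P)) Q - Q.
have cQs j : Qs`_j = Q`_j \Po ('X + 1%:P) - Q`_j.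
  by rewrite coefB coef_map_id0 // comp_poly0.
apply: (IH Qs).
- apply: contra_notN hi => /eqP Qs0; move: (cQs i); rewrite Qs0 coef0 => /esym/eqP.
  rewrite subr_eq0; apply: contraTT => hi; apply: comp_Xadd1_neq.
  by move: hi; rewrite -ltnNge; lia.
- by move=> v; rewrite polyopB (annihilator_shift _ hQ) hQ subrr.
- move=> j; rewrite cQs; apply: leq_trans (size_comp_XaddC_sub _ _) _.
  by move: (hs j); case: (size _).
Qed.

End Annihilator.

(* With [Q] the product of the denominators [q_j] of the [C x_j], [Q(z) C]
   acts on the spanning family by a matrix over [K[z]]; its characteristic
   polynomial, evaluated at [Q(z) C], is the annihilator. *)
Lemma exists_act_annihilator d (x : 'I_d -> V) :
  (forall v, exists q (ps : 'I_d -> {poly K}),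
      q != 0 /\ pev q v = \sum_(i < d) pev (ps i) (x i)) ->
  exists P, P != 0 /\ forall v, act P v = 0.
Proof.
move=> span.
have hx j : exists qp : {poly K} * ('I_d -> {poly K}),
    qp.1 != 0 /\ pev qp.1 (cas (x j)) = \sum_i pev (qp.2 i) (x i).
  by have [q [ps [q0 e]]] := span (cas (x j)); exists (q, ps).
have [qps qpsP] := fin_all_exists hx.
pose Q := \prod_(j < d) (qps j).1.
have Q0 : Q != 0 by apply/prodf_neq0 => j _; case: (qpsP j).
pose CQ v := pev Q (cas v).
have CQ_lin : lin_map CQ :=
  linmap_comp (polyop_scale_lin (L0_lin rho) Q) (casimir_lin rho).
have CQ_L0 v : CQ (l0 v) = l0 (CQ v) by rewrite /CQ casimir_L0 polyop_op.
pose D := pev_endo CQ_lin CQ_L0.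
pose B : 'M[{poly K}]_d :=
  \matrix_(j, i) ((\prod_(l < d | l != j) (qps l).1) * (qps j).2 i).
have hB j : op D (x j) = \sum_i sc D (B j i) (x i).
  rewrite /= /CQ /Q (bigD1 j) //= mulrC polyopM (qpsP j).2 polyop_vec_sum.
  by apply: eq_bigr => i _; rewrite mxE polyopM.
pose chi := char_poly B.
have chi_ann v : polyop D chi v = 0.
  have [q [ps [q0 e]]] := span v; apply: (pev_inj _ q0).
  rewrite -[pev q _]/(sc D q _) sc_polyop /= e polyop_vec_sum big1 // => i _.
  by rewrite -[pev _ _]/(sc D (ps i) (x i)) -sc_polyop polyop_char_poly //= polyop_vec0.
have iterD k v : iter k (op D) v = pev (Q ^+ k) (iter k cas v).
  elim: k => [|k IH]; first by rewrite expr0 polyop1.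
  by rewrite /= IH /CQ casimir_pev -polyopM -exprS.
exists (\poly_(k < size chi) (chi`_k * Q ^+ k)); split=> [|v].
  exact/poly_monic_dilate_neq0/Q0/char_poly_monic.
rewrite -(chi_ann v) [RHS]/polyop (@polyop_pad _ _ _ _ (size chi)) ?size_poly //.
by apply: eq_bigr => i _; rewrite coef_poly ltn_ord iterD /= polyopM.
Qed.

End TorsionFree.

Lemma rational_casimir_annihilator : rational_mod rho ->
  exists p : {poly K}, p != 0 /\ forall v, cpol p v = 0.
Proof.
move=> hr; have [hbij [vs [_ hspan]]] := hr.
have pev_inj p : p != 0 -> forall v, pev p v = 0 -> v = 0.
  by move=> p0 v; apply: (hbij p p0).1.
have [P [P0 hP]] := exists_act_annihilator pev_inj _ _ (fun v => hspan v I).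
apply: (annihilator_descent pev_inj _ P0 hP (\sum_(j < size P) size (P`_j)%R) _ P0 hP).
move=> i; apply: leqW; case: (ltnP i (size P)) => hi.
  by rewrite (bigD1 (Ordinal hi)) //= leq_addr.
by rewrite nth_default // size_poly0.
Qed.

Lemma casimir_kernel_submod r : is_submod rho (fun v => cpol r v = 0).
Proof.
have comm g : lin_map g -> (forall v, cas (g v) = g (cas v)) ->
    forall u, cpol r u = 0 -> cpol r (g u) = 0.
  move=> hg gC u hu; rewrite -(polyop_comm _ _ (linmapD hg)) => [|v|c v] /=.
  - by rewrite hu linmap0.
  - by rewrite gC.
  - by rewrite linmapZ.
split; split.
- exact: polyop_vec0.
- by move=> u v hu hv; rewrite polyop_vecD hu hv addr0.
- by move=> a u hu; rewrite (linmapZ (polyop_scale_lin _ r)) hu scaler0.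
- by apply: comm; [exact: rho_e_lin|move=> w; rewrite casimir_e].
- by apply: comm; [exact: rho_f_lin|move=> w; rewrite casimir_f].
- by apply: comm; [exact: rho_h_lin|move=> w; rewrite casimir_h].
Qed.

Lemma cpol_XsubC_exp (mu : K) m v :
  cpol (('X - mu%:P) ^+ m) v = iter m (fun w => cas w - mu *: w) v.
Proof.
elim: m => [|m IH] /=; first by rewrite expr0 polyop1.
by rewrite exprS polyopM IH polyopB polyopX polyop_scaleC.
Qed.

End Sl2Casimir.

Section Sl2Closed.
Context {K : numClosedFieldType} {V : lmodType K} (rho : sl2rep V).
Local Notation cpol := (polyop (scale_endo (casimir_lin rho))).

(* Split off the generalized eigenspace of a root [mu] of [p]; by
   indecomposability one of the two kernels is trivial. *)
Lemma casimir_annihilator_gen_casimir p : p != 0 -> (forall v, cpol p v = 0) ->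
  indecomposable rho -> gen_casimir rho.
Proof.
move=> + + [[w [_ w0]] hind].
elim: {p}(size p) {-2}p (leqnn (size p)) => [|n IH] p hs p0 hp.
  by move: hs; rewrite leqn0 size_poly_eq0 (negbTE p0).
have [s1|/closed_rootP [mu rmu]] := eqVneq (size p) 1.
  have pC : p = (p`_0)%:P by apply: size1_polyC; rewrite s1.
  have c0 : p`_0 != 0 by apply: contraNneq p0 => c0; rewrite pC c0.
  move: (hp w); rewrite pC polyop_scaleC => /eqP.
  by rewrite scaler_eq0 (negbTE c0) (negbTE w0).
have [m [q /implyP/(_ p0) rq pE]] := multiplicity_XsubC p mu.
have m0 : (0 < m)%N.
  by rewrite lt0n; apply: contraNneq rq => m0; move: rmu; rewrite pE m0 mulr1.
have q0 : q != 0 by apply: contraNneq p0 => q0; rewrite pE q0 mul0r.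
have cop : coprimep (('X - mu%:P) ^+ m) q.
  by rewrite coprimep_sym; apply: coprimep_expr; rewrite coprimep_XsubC.
pose S1 v := cpol (('X - mu%:P) ^+ m) v = 0; pose S2 v := cpol q v = 0.
have hsum : direct_sum (@whole K V) S1 S2.
  by apply: (polyop_coprime_direct_sum _ _ _ cop) => v; rewrite mulrC -pE.
have [n1|n1] := classic (nonzero_on S1).
  have [n2|n2] := classic (nonzero_on S2).
    case: hind; exists S1, S2.
    by split=> //; split=> //; exact: casimir_kernel_submod.
  exists mu, m; split=> // v _; rewrite -cpol_XsubC_exp.
  exact: direct_sum_trivial_r hsum n2 v.
apply: (IH q) => //; last exact: direct_sum_trivial_r (direct_sum_sym hsum) n1.
rewrite -ltnS (leq_trans _ hs) // pE size_mul ?expf_neq0 ?polyXsubC_eq0 //.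
by rewrite size_exp_XsubC addnS /= -{1}[size q]addn0 ltn_add2l.
Qed.

Lemma rational_indecomposable_gen_casimir :
  rational_mod rho -> indecomposable rho -> gen_casimir rho.
Proof.
move=> /rational_casimir_annihilator [p [p0 hp]].
exact: casimir_annihilator_gen_casimir p0 hp.
Qed.

Lemma gen_casimir_R_indecomposable :
  gen_casimir rho -> RC_indecomposable rho -> R_indecomposable rho.
Proof.
move=> [mu [n [n0 hn]]]; apply: indec_wrt_mono => S hS; split=> //.
by exists mu, n; split=> // v _; exact: hn.
Qed.

End Sl2Closed.

Theorem proposition6p10 (R : realType) (V : lmodType R[i]) (rho : sl2rep V) :
  (rational_mod rho -> (indecomposable rho <-> R_indecomposable rho)) /\
  (rational_mod rho -> indecomposable rho -> gen_casimir rho) /\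
  ((rational_mod rho /\ indecomposable rho) <-> (rational_mod rho /\ R_indecomposable rho)) /\
  ((rational_mod rho /\ R_indecomposable rho) <->
     (rational_gen_casimir rho /\ RC_indecomposable rho)) /\
  ((rational_gen_casimir rho /\ RC_indecomposable rho) <->
     (rational_gen_casimir rho /\ indecomposable rho)).
Proof.
have indE := @rational_indecomposableE _ _ rho.
have gen := @rational_indecomposable_gen_casimir _ _ rho.
have RC_R := @gen_casimir_R_indecomposable _ _ rho.
have R_RC : R_indecomposable rho -> RC_indecomposable rho.
  by apply: indec_wrt_mono => S [].
split=> //; split=> //; split.
  by split=> -[hr hi]; split=> //; apply/(indE hr).
split.
  split=> [[hr /(indE hr) hi]|[[hr hg] /(RC_R hg) hi]]; last by [].
  by split; [split=> //; exact: gen|apply/R_RC/(indE hr)].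
by split=> -[[hr hg] hi]; split=> //; [apply/(indE hr)/RC_R|apply/R_RC/(indE hr)].
Qed.
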